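(* Let $k$ be a field and $s,t$ indeterminates over $k$. For $i\geq 1$ let $\tau_i=(-1)^i\left(t^i+st^{i-1}+\dots+s^{i-1}t+s^i\right)\in k[s,t]$. (i) For every $i\geq 1$, let $\overline{A}_i$ be the $i\times(i+2)$ matrix over $k[s,t]$ whose $r$-th row ($1\le r\le i$) has entry $s$ in column $r$, entry $-(t+s)$ in column $r+1$, entry $t$ in column $r+2$, and $0$ elsewhere, and let $B_i$ be the $i\times i$ submatrix of $\overline{A}_i$ obtained by deleting its first and last columns. Then $\det B_i=\tau_i$. (ii) Let $\mathcal{S}$ be an infinite set of positive integers. Suppose that either $k$ has characteristic zero, or $k$ has prime characteristic $p$ and $\mathcal{S}$ contains infinitely many integers of the form $p^m-2$ ($m$ a positive integer). Then the set of irreducible factors in $k[s,t]$ of the polynomials $\tau_i$, $i\in\mathcal{S}$, is infinite. *)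

(* k[s,t] is modelled as {poly {poly k}}:
   s = 'X%:P (the inner variable, embedded as a constant), t = 'X (outer variable). *)
From HB Require Import structures.
From mathcomp Require Import all_boot all_order all_algebra.
Set Implicit Arguments. Unset Strict Implicit. Unset Printing Implicit Defensive.
Import Order.TTheory GRing.Theory Num.Theory.
Local Open Scope ring_scope.

Section Defs.
Variable k : fieldType.

Definition Rst := {poly {poly k}}.
Definition s_var : {poly {poly k}} := ('X)%:P.
Definition t_var : {poly {poly k}} := 'X.

Definition tau (i : nat) : {poly {poly k}} :=
  (-1) ^+ i * \sum_(j < i.+1) t_var ^+ (i - j) * s_var ^+ j.

Definition Abar (i : nat) : 'M[{poly {poly k}}]_(i, i.+2) :=
  \matrix_(r < i, c < i.+2)
    (if (c : nat) == r then s_var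
     else if (c : nat) == r.+1 then - (t_var + s_var)
     else if (c : nat) == r.+2 then t_var
     else 0).

Definition Bmat (i : nat) : 'M[{poly {poly k}}]_i :=
  \matrix_(r < i, c < i) Abar i r (@inord i.+1 c.+1).
End Defs.

Definition rdvd (R : comRingType) (a b : R) : Prop := exists c : R, b = a * c.

Definition ring_irreducible (R : idomainType) (p : R) : Prop :=
  p != 0 /\ p \isn't a GRing.unit /\
  forall a b : R, p = a * b -> a \is a GRing.unit \/ b \is a GRing.unit.

Definition associated (R : comRingType) (a b : R) : Prop := rdvd a b /\ rdvd b a.

(** Part (i): [B_i] is tridiagonal with diagonal [-(t+s)], subdiagonal [s] and
    superdiagonal [t], so its determinants satisfy
    [D_(n+2) = -(t+s) D_(n+1) - s t D_n]; so does [tau_n], as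
    [(t - s) tau_n = (-1)^n (t^(n+1) - s^(n+1))].

    Part (ii): specializing [t := 1] sends [tau_i] to [±(1 + s + ... + s^i)],
    which divides [s^(i+1) - 1] and is therefore squarefree whenever
    [(i+1)%:R != 0]; the hypotheses on [S] provide such [i] of arbitrarily
    large degree.  Were all irreducible factors of the [tau_i], [i \in S],
    associated to members of a finite list [l], then every such specialized
    [tau_i], being squarefree and a product of specialized factors, would
    divide the fixed nonzero product of the nonzero specializations of the
    members of [l], bounding its degree. *)
From HB Require Import structures.
From mathcomp Require Import all_boot all_order all_algebra.
From mathcomp Require Import separable cyclotomic.
From mathcomp Require Import ring zify.
From Stdlib Require Import Classical.
Set Implicit Arguments. Unset Strict Implicit. Unset Printing Implicit Defensive.
Import Order.TTheory GRing.Theory Num.Theory.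
Local Open Scope ring_scope.

Lemma bump_lt m i : (i < m)%N -> bump m i = i.
Proof. by move=> lt_im; rewrite /bump leqNgt lt_im. Qed.

Section Tridiagonal.
Variable R : comPzRingType.

Lemma det_lastcol_corner n (A : 'M[R]_n.+1) :
  (forall i : 'I_n.+1, i != ord_max -> A i ord_max = 0) ->
  \det A = A ord_max ord_max * \det (row' ord_max (col' ord_max A)).
Proof.
move=> A_lastcol; rewrite (expand_det_col _ ord_max) (bigD1 ord_max) //= big1 ?addr0.
  by rewrite /cofactor -signr_odd addnn odd_double mul1r.
by move=> i /A_lastcol ->; rewrite mul0r.
Qed.

Variables a b c : R.

Definition trid_entry (i j : nat) : R :=
  if j.+1 == i then b else if j == i then a else if j == i.+1 then c else 0.

Definition trid n : 'M[R]_n := \matrix_(i < n, j < n) trid_entry i j.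

Lemma trid_minor_max n : row' ord_max (col' ord_max (trid n.+1)) = trid n.
Proof. by apply/matrixP => i j; rewrite !mxE /= !bump_lt. Qed.

Lemma det_trid_minor n (j0 : 'I_n.+2) : j0 = n :> nat ->
  \det (row' ord_max (col' j0 (trid n.+2))) = c * \det (trid n).
Proof.
move=> j0n; have bump_n : bump j0 n = n.+1 by rewrite j0n /bump leqnn.
rewrite det_lastcol_corner => [|i /negPf i_max]; rewrite !mxE /= bump_n.
  rewrite bump_lt // /trid_entry (gtn_eqF (ltnSn n)) (gtn_eqF (leqW (ltnSn n))) eqxx.
  congr (_ * _); apply: f_equal; apply/matrixP => i j.
  by rewrite !mxE /= !bump_lt ?j0n // (leqW (ltn_ord i)).
have lt_in : (i < n)%N by move: i_max (ltn_ord i); rewrite -val_eqE /=; lia.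
by rewrite bump_lt ?(leqW lt_in) // /trid_entry !ifF //; lia.
Qed.

Lemma det_trid_rec n :
  \det (trid n.+2) = a * \det (trid n.+1) - b * c * \det (trid n).
Proof.
rewrite (expand_det_row _ ord_max) !big_ord_recr /= big1 ?add0r => [|j _]; last first.
  by have := ltn_ord j; rewrite mxE /= /trid_entry => lt_jn; rewrite !ifF ?mul0r //; lia.
rewrite /cofactor !mxE /trid_entry /= eqxx (gtn_eqF (ltnSn n.+1)).
rewrite trid_minor_max det_trid_minor //.
rewrite -[(-1) ^+ (n.+1 + n)]signr_odd -[(-1) ^+ (n.+1 + n.+1)]signr_odd.
by rewrite !oddD addbb /= addNb addbb /=; ring.
Qed.
End Tridiagonal.

Section Tau.
Variable k : fieldType.
Local Notation s := (s_var k).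
Local Notation t := (t_var k).

Lemma Bmat_trid n : Bmat k n = trid (- (t + s)) s t n.
Proof. by apply/matrixP => i j; rewrite !mxE inordK ?eqSS // !ltnS ltnW. Qed.

Lemma subts_mul_tau n : (t - s) * tau k n = (-1) ^+ n * (t ^+ n.+1 - s ^+ n.+1).
Proof. by rewrite subrXX /tau mulrCA. Qed.

Lemma tau_rec n : tau k n.+2 = - (t + s) * tau k n.+1 - s * t * tau k n.
Proof.
have t_neq_s : t - s != 0 by rewrite -size_poly_eq0 size_XsubC.
apply: (mulfI t_neq_s); rewrite mulrBr (mulrCA _ (- _)) (mulrCA _ (s * t)).
by rewrite !subts_mul_tau !exprS; ring.
Qed.

Lemma det_Bmat n : \det (Bmat k n) = tau k n.
Proof.
suff: \det (Bmat k n) = tau k n /\ \det (Bmat k n.+1) = tau k n.+1 by case.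
elim: n => [|n [IHn IHn1]].
  rewrite !Bmat_trid det_mx00 det_mx11 mxE /tau !big_ord_recr !big_ord0 /=.
  by rewrite /trid_entry /= !subnn; split; ring.
by split=> //; rewrite Bmat_trid det_trid_rec -!Bmat_trid IHn IHn1 tau_rec.
Qed.
End Tau.

Section SeparableDivisors.
Variable K : fieldType.
Implicit Types G x y : {poly K}.

Lemma separable_divp_gcdp_dvdp G x y :
  separable_poly G -> G %| x * y -> G %/ gcdp G x %| y.
Proof.
move=> sepG G_xy; set d := gcdp G x; set G' := G %/ d.
have G_eq : G = G' * d by rewrite divpK ?dvdp_gcdl.
have coprime_d_G' : coprimep d G'.
  by apply: (separable_coprime sepG); rewrite [X in _ %| X]G_eq mulrC.
have coprime_G'_x : coprimep G' x.
  apply/coprimepP => h h_G' h_x; apply: (coprimepP _ _ coprime_d_G') => //.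
  by rewrite dvdp_gcd h_x (dvdp_trans h_G') // [X in _ %| X]G_eq dvdp_mulr.
by rewrite -(Gauss_dvdpr _ coprime_G'_x) (dvdp_trans _ G_xy) // [X in _ %| X]G_eq dvdp_mulr.
Qed.

Lemma separable_dvdp_prod_cover G (Q L : seq {poly K}) :
  separable_poly G -> G %| \prod_(x <- Q) x ->
  {in Q, forall x, exists2 y, y \in L & x %| y} -> G %| \prod_(y <- L) y.
Proof.
elim: Q G => [|x Q IHQ] G sepG.
  by rewrite big_nil => G_1 _; apply: dvdp_trans G_1 (dvd1p _).
rewrite big_cons => G_xQ QL; set d := gcdp G x; set G' := G %/ d.
have G_eq : G = G' * d by rewrite divpK ?dvdp_gcdl.
have sepG' : separable_poly G'.
  by apply: dvdp_separable sepG; rewrite [X in _ %| X]G_eq dvdp_mulr.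
have G'_L : G' %| \prod_(y <- L) y.
  apply: IHQ sepG' (separable_divp_gcdp_dvdp sepG G_xQ) _ => z zQ.
  by apply: QL; rewrite inE zQ orbT.
have [y yL x_y] := QL x (mem_head _ _).
have d_L : d %| \prod_(y <- L) y.
  by rewrite (dvdp_trans (dvdp_gcdr G x)) // (dvdp_trans x_y) // (big_rem y) //= dvdp_mulr.
have coprime_G'_d : coprimep G' d by apply: (separable_coprime sepG); rewrite -G_eq.
by rewrite G_eq Gauss_dvdp // G'_L d_L.
Qed.
End SeparableDivisors.

Section Factorization.
Variables (R : idomainType) (mu : R -> nat).
Hypothesis mu_mulr_gt : forall a b : R,
  a != 0 -> b != 0 -> b \isn't a GRing.unit -> (mu a < mu (a * b))%N.

Lemma irreducible_factorization (p : R) : p != 0 ->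
  exists2 fs : seq R, {in fs, forall q, ring_irreducible q} &
    exists2 u, u \is a GRing.unit & p = u * \prod_(q <- fs) q.
Proof.
have [n] := ubnP (mu p); elim: n p => // n IHn p /ltnSE p_le_n p_neq0.
have [p_unit | p_nonunit] := boolP (p \is a GRing.unit).
  by exists [::] => //; exists p; rewrite ?big_nil ?mulr1.
have [p_irr | p_red] := classic (ring_irreducible p).
  exists [:: p]; first by move=> q /[!inE] /eqP ->.
  by exists 1; rewrite ?unitr1 ?big_seq1 ?mul1r.
have [a [b [p_ab a_nonunit b_nonunit]]] : exists a b, [/\ p = a * b,
    a \isn't a GRing.unit & b \isn't a GRing.unit].
  apply: NNPP => no_split; apply: p_red; split=> //; split=> // a b p_ab.
  by apply: NNPP => /not_or_and[/negP a_nonunit /negP b_nonunit]; apply: no_split; exists a, b.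
have [a_neq0 b_neq0] : a != 0 /\ b != 0 by apply/andP; rewrite -negb_or -mulf_eq0 -p_ab.
have mu_a : (mu a < n)%N by rewrite (leq_trans _ p_le_n) // p_ab mu_mulr_gt.
have mu_b : (mu b < n)%N by rewrite (leq_trans _ p_le_n) // p_ab mulrC mu_mulr_gt.
have [fa fa_irr [ua ua_unit a_eq]] := IHn a mu_a a_neq0.
have [fb fb_irr [ub ub_unit b_eq]] := IHn b mu_b b_neq0.
exists (fa ++ fb); first by move=> q /[!mem_cat] /orP[/fa_irr|/fb_irr].
by exists (ua * ub); rewrite ?unitrM ?ua_unit // big_cat p_ab a_eq b_eq /=; ring.
Qed.
End Factorization.

Section Bivariate.
Variable k : fieldType.

Definition lead_size (p : {poly {poly k}}) := (size p + size (lead_coef p))%N.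

Lemma lead_size_mulr_gt (a b : {poly {poly k}}) :
  a != 0 -> b != 0 -> b \isn't a GRing.unit -> (lead_size a < lead_size (a * b))%N.
Proof.
move=> a_neq0 b_neq0 b_nonunit; rewrite /lead_size lead_coefM !size_mul ?lead_coef_eq0 //.
have : (1 < size b)%N || (1 < size (lead_coef b))%N.
  apply: contraR b_nonunit; rewrite negb_or -!leqNgt => /andP[b_size lb_size].
  have /size_poly1P[c c_neq0 b_eq] : size b == 1%N by rewrite eqn_leq b_size size_poly_gt0.
  move: lb_size; rewrite b_eq lead_coefC => c_size.
  have /size_poly1P[d d_neq0 c_eq] : size c == 1%N by rewrite eqn_leq c_size size_poly_gt0.
  by rewrite c_eq; do 2!apply: rmorph_unit; rewrite unitfE.
have := size_poly_gt0 a; have := size_poly_gt0 b.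
have := size_poly_gt0 (lead_coef a); have := size_poly_gt0 (lead_coef b).
rewrite !lead_coef_eq0 a_neq0 b_neq0 -!subn1.
by move: (size a) (size b) (size (lead_coef a)) (size (lead_coef b)) => x y z w; lia.
Qed.

(* The outer variable of [{poly {poly k}}] is [t], so [p.[1]] is [p] at [t = 1]. *)
Lemma tau_t1 i : (tau k i).[1] = (-1) ^+ i * \sum_(j < i.+1) 'X^j.
Proof.
rewrite -horner_evalE /tau rmorphM rmorph_sign rmorph_sum; congr (_ * _).
apply: eq_bigr => j _; rewrite rmorphM !rmorphXn /= !horner_evalE /t_var /s_var.
by rewrite hornerX hornerC expr1n mul1r.
Qed.

Lemma tau_t1_eqp i : (tau k i).[1] %= \sum_(j < i.+1) 'X^j.
Proof.
by rewrite tau_t1 -[(-1) ^+ i](rmorph_sign (@polyC k)) mul_polyC eqp_scale ?signr_eq0.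
Qed.

Lemma size_sum_Xn n : size (\sum_(j < n) 'X^j : {poly k}) = n.
Proof.
have -> : \sum_(j < n) 'X^j = \poly_(j < n) (1 : k).
  by rewrite poly_def; apply: eq_bigr => j _; rewrite scale1r.
exact/size_poly_eq/oner_neq0.
Qed.

Lemma separable_sum_Xn n :
  n%:R != 0 :> k -> separable_poly (\sum_(j < n) 'X^j : {poly k}).
Proof.
move=> n_neq0; apply: dvdp_separable (separable_Xn_sub_1 n_neq0).
by rewrite subrX1 dvdp_mull.
Qed.

Lemma horner1_dvdp_prod_cover (l : seq {poly {poly k}}) (p : {poly {poly k}}) :
  separable_poly p.[1] ->
  (forall q, ring_irreducible q -> rdvd q p -> exists r, r \in l /\ associated q r) ->
  p.[1] %| \prod_(r <- l | r.[1] != 0) r.[1].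
Proof.
move=> sep_p1 l_covers; have p1_neq0 := separable_poly_neq0 sep_p1.
have p_neq0 : p != 0 by apply: contraNneq p1_neq0 => ->; rewrite horner0.
have [fs fs_irr [u u_unit p_eq]] :=
  irreducible_factorization (@lead_size_mulr_gt) p_neq0.
rewrite -big_filter -[X in _ %| X](big_map (horner_eval 1) xpredT (fun y => y)).
apply: (separable_dvdp_prod_cover (Q := map (horner_eval 1) fs) sep_p1).
  have u1_unit : u.[1] \is a GRing.unit := rmorph_unit (horner_eval 1) u_unit.
  rewrite big_map -rmorph_prod /= horner_evalE.
  by rewrite -(mulKr u1_unit (\prod_(q <- fs) q).[1]) -hornerM -p_eq dvdp_mull.
move=> _ /mapP[q q_fs ->].
have q_p : rdvd q p.
  by exists (u * \prod_(x <- rem q fs) x); rewrite p_eq (big_rem q q_fs) /=; ring.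
have [r [r_l [[c q_r] [c' r_q]]]] := l_covers q (fs_irr q q_fs) q_p.
have q1_neq0 : q.[1] != 0.
  by move: q_p p1_neq0 => [c'' ->]; rewrite hornerM mulf_eq0 negb_or => /andP[].
exists (horner_eval 1 r); last by rewrite !horner_evalE q_r hornerM dvdp_mulr.
rewrite map_f // mem_filter r_l andbT.
by apply: contraNneq q1_neq0; rewrite r_q hornerM => ->; rewrite mul0r.
Qed.
End Bivariate.

Lemma exists_index_natr_neq0 (R : idomainType) (S : nat -> Prop) N :
  (forall N, exists i, (N < i)%N /\ S i) ->
  ([pchar R] =i pred0 \/ exists p, p \in [pchar R] /\
     forall N, exists m, (N < m)%N /\ S (p ^ m - 2)%N) ->
  exists i, [/\ S i, (N < i)%N & i.+1%:R != 0 :> R].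
Proof.
move=> S_unbounded [/pcharf0P char0 | [p [p_char S_pow]]].
  by have [i [N_i Si]] := S_unbounded N; exists i; rewrite char0.
have [m [N_m Sm]] := S_pow N.+2.
have pm_gt : (N.+2 < p ^ m)%N := ltn_trans N_m (ltn_expl m (prime_gt1 (pcharf_prime p_char))).
exists (p ^ m - 2)%N; split=> //; first lia.
have -> : (p ^ m - 2).+1 = (p ^ m - 1)%N by lia.
have m_gt0 : (0 < m)%N by lia.
rewrite natrB; last lia.
by rewrite natrX (pcharf0 p_char) expr0n (gtn_eqF m_gt0) sub0r oppr_eq0 oner_eq0.
Qed.

Unset Implicit Arguments.

Theorem lemma1p1 (k : fieldType) :
  (forall i : nat, (1 <= i)%N -> \det (Bmat k i) = tau k i) /\
  (forall S : nat -> Prop,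
     (forall i, S i -> (0 < i)%N) ->
     (forall N : nat, exists i, (N < i)%N /\ S i) ->
     ([pchar k] =i pred0 \/
      exists p : nat, p \in [pchar k] /\
        (forall N : nat, exists m : nat, (N < m)%N /\ S (p ^ m - 2)%N)) ->
     ~ exists l : seq {poly {poly k}},
         forall q : {poly {poly k}},
           ring_irreducible q ->
           (exists i, S i /\ rdvd q (tau k i)) ->
           exists r, r \in l /\ associated q r).
Proof.
split=> [i _ | S _ S_unbounded char_S [l l_covers]]; first exact: det_Bmat.
set P := \prod_(r <- l | r.[1] != 0) r.[1].
have P_neq0 : P != 0 by rewrite prodf_seq_neq0; apply/allP => r _; apply/implyP.
have [i [Si P_lt_i char_i]] := exists_index_natr_neq0 (size P) S_unbounded char_S.
have tau1_P : (tau k i).[1] %| P.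
  apply: horner1_dvdp_prod_cover => [|q q_irr q_tau].
    by rewrite (eqp_separable (tau_t1_eqp k i)) separable_sum_Xn.
  exact: l_covers q q_irr (ex_intro _ i (conj Si q_tau)).
have := dvdp_leq P_neq0 tau1_P; rewrite (eqp_size (tau_t1_eqp k i)) size_sum_Xn.
by rewrite leqNgt ltnS (ltnW P_lt_i).
Qed.
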